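(* Let $S$ be a CLP-compact semitopological semigroup which contains a graph inverse semigroup $G(E)$ as a dense subsemigroup. Then for each subset $X\subset G(E)$ the closure $\overline{X}^S$ is countably compact at $X$.
   Context: All spaces are Hausdorff. A semitopological semigroup is a space with separately continuous associative multiplication. CLP-compact: every cover by clopen sets has a finite subcover. A space $W$ is countably compact at $A\subset W$ if every infinite $B\subset A$ has an accumulation point in $W$. A directed graph $E=(E^0,E^1,r,s)$ has vertices $E^0$, edges $E^1$, source/range maps $s,r:E^1\to E^0$; paths are vertices and sequences of edges $e_1\ldots e_n$ with $r(e_i)=s(e_{i+1})$. The graph inverse semigroup $G(E)$ is the semigroup with zero $0$ generated by $E^0$, $E^1$, $E^{-1}=\{e^{-1}\mid e\in E^1\}$ subject to: for $a,b\in E^0$, $e,f\in E^1$: $ab=a$ if $a=b$, else $0$; $s(e)e=er(e)=e$; $e^{-1}s(e)=r(e)e^{-1}=e^{-1}$; $e^{-1}f=r(e)$ if $e=f$, else $0$. *)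

From mathcomp Require Import all_boot all_order.
From mathcomp Require Import all_classical all_reals topology.
Set Implicit Arguments. Unset Strict Implicit. Unset Printing Implicit Defensive.
Local Open Scope classical_set_scope.

(* A directed graph E = (E^0, E^1, r, s): vertex type V, edge type Ed,
   source map [gsrc] and range map [grng]. *)

Section GraphInverse.
Variables (V Ed : eqType) (gsrc grng : Ed -> V).

(* A path is represented as a pair (v, es): a start vertex v and a finite
   sequence of edges es = e_1 ... e_n with s(e_1) = v and r(e_i) = s(e_(i+1)).
   When es = [::] the pair represents the vertex v itself (a path of length 0). *)
Definition gpath := (V * seq Ed)%type.

Fixpoint walk (v : V) (es : seq Ed) : bool :=
  if es is e :: es' then (gsrc e == v) && walk (grng e) es' else true.

Definition is_path (p : gpath) : bool := walk p.1 p.2.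

Definition psrc (p : gpath) : V := p.1.
Definition prng (p : gpath) : V := last p.1 (map grng p.2).

(* Normal form of G(E): 0 is [None]; a nonzero element u v^{-1}, with u, v
   paths and r(u) = r(v), is [Some (u, v)]. *)
Definition GIraw := option (gpath * gpath).

Definition GIelem : set GIraw :=
  [set x | match x with
           | None => True
           | Some (u, v) => [/\ is_path u, is_path v & prng u = prng v]
           end].

(* Product in normal form:
   (a b^{-1})(c d^{-1}) = a c' d^{-1}     if c = b c',
                        = a (d b')^{-1}   if b = c b',
                        = 0               otherwise. *)
Definition GImul (x y : GIraw) : GIraw :=
  match x, y with
  | Some (a, b), Some (c, d) =>
      if (c.1 == b.1) && prefix b.2 c.2 then
        Some ((a.1, a.2 ++ drop (size b.2) c.2), d)
      else if (b.1 == c.1) && prefix c.2 b.2 then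
        Some (a, (d.1, d.2 ++ drop (size c.2) b.2))
      else None
  | _, _ => None
  end.

Definition GIzero : GIraw := None.
Definition GIvertex (v : V) : GIraw := Some ((v, [::]), (v, [::])).
Definition GIedge (e : Ed) : GIraw := Some ((gsrc e, [:: e]), (grng e, [::])).
Definition GIinvedge (e : Ed) : GIraw := Some ((grng e, [::]), (gsrc e, [:: e])).

End GraphInverse.

Definition semitopological_semigroup (S : topologicalType) (mul : S -> S -> S) :=
  associative mul /\
  (forall a : S, continuous (mul a)) /\
  (forall a : S, continuous (fun x => mul x a)).

Definition CLP_compact (S : topologicalType) :=
  forall F : set (set S),
    (forall A, F A -> clopen A) -> [set: S] `<=` \bigcup_(A in F) A ->
    exists2 G : set (set S), finite_set G /\ G `<=` F &
                             [set: S] `<=` \bigcup_(A in G) A.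

(* Since accumulation points in the
   subspace W are exactly the points of W that are accumulation points in S,
   we state it with [limit_point] of S. *)
Definition countably_compact_at (S : topologicalType) (W A : set S) :=
  forall B : set S, B `<=` A -> infinite_set B ->
    exists2 x, W x & limit_point B x.

(* Every nonzero element of G(E) is isolated in S.  For a vertex w, separate
   continuity keeps wy, yw (and, if an edge e leaves w, also e^-1 y, ye) nonzero
   and keeps y from being fixed by ee^-1 on either side for y near w; the only
   such y in G(E) is w itself.  For z = uv^-1 the continuous map s |-> u^-1 s v
   sends z to the isolated vertex r(u) and only finitely many elements of G(E)
   to it, so z is isolated as well; density then makes {z} open in S.
   If an infinite B inside the image of X had no accumulation point, B minus 0
   would be an infinite clopen set of isolated points, and its singletons
   together with its complement would form a clopen cover of S without a finite
   subcover. *)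

From mathcomp Require Import all_boot all_order.
From mathcomp Require Import all_classical all_reals topology.
Local Open Scope classical_set_scope.
Set Implicit Arguments. Unset Strict Implicit. Unset Printing Implicit Defensive.

Section Topology.
Variable T : topologicalType.

Lemma nbhs_setC_finite (F : set T) (x : T) :
  accessible_space T -> finite_set F -> ~ F x -> nbhs x (~` F).
Proof.
move=> acc finF Fx; apply: open_nbhs_nbhs; split => //.
by apply: closed_openC; apply: (proj1 accessible_finite_set_closed).
Qed.

Lemma nbhs_preimage_neq (g : T -> T) (x y : T) :
  accessible_space T -> continuous g -> g x <> y -> nbhs x [set s | g s <> y].
Proof.
move=> acc cg gxy; apply: (cg x (~` [set y])).
exact: nbhs_setC_finite (finite_set1 y) gxy.
Qed.

Lemma nbhs_not_fixed (g : T -> T) (x : T) :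
  hausdorff_space T -> continuous g -> g x <> x -> nbhs x [set s | g s <> s].
Proof.
move=> hT cg gxx; apply: contrapT => N; apply: gxx; apply: hT => A B nA nB.
have /existsNP[s /not_implyP[[Bs As] /contrapT gs]] :
    ~ (B `&` g @^-1` A `<=` [set s | g s <> s]).
  by move=> sub; apply: N; apply: filterS sub (filterI nB (cg x A nA)).
by exists s; split => //; rewrite -gs.
Qed.

Lemma isolated_pullback (g : T -> T) (A P : set T) (x : T) :
  accessible_space T -> continuous g -> g @` A `<=` P -> isolated P (g x) ->
  A x -> finite_set (A `&` g @^-1` [set g x]) -> isolated A x.
Proof.
move=> acc cg gAP [_ [N nN NP]] Ax finF.
split; first exact: mem_set.
exists (g @^-1` N `&` ~` ((A `&` g @^-1` [set g x]) `\ x)).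
  apply: filterI; first exact: cg.
  apply: nbhs_setC_finite acc (finite_setD _ finF) _.
  by move=> [_]; apply.
apply/seteqP; split => [s [[Ns notF] As]|_ ->]; last first.
  by split=> //; split=> [|[_ []]//]; exact: (nbhs_singleton (cg x _ nN)).
have : (N `&` P) (g s) by split => //; apply: gAP; exists s.
rewrite NP => gsx; apply: contrapT => sx; exact: notF.
Qed.

Lemma isolated_dense_open_set1 (D : set T) (x : T) :
  accessible_space T -> closure D = [set: T] -> isolated D x -> open [set x].
Proof.
move=> acc dense [_ [N nN ND]].
have [U [oU Ux] UN] : exists2 U, open_nbhs x U & U `<=` N by move: nN; rewrite nbhsE.
suff -> : [set x] = U by [].
apply/seteqP; split => [_ -> //|s Us].
apply: (accessible_closed_set1 acc) => W nW.
have nWU : nbhs s (W `&` U) by apply: filterI => //; exact: open_nbhs_nbhs.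
have : closure D s by rewrite dense.
move=> /(_ _ nWU) [d [Dd [Wd Ud]]].
have : (N `&` D) d by split => //; exact: UN.
by rewrite ND => dx; exists d; rewrite -dx.
Qed.

Lemma closed_of_sub_no_limit_point (A B : set T) :
  (forall x, ~ limit_point B x) -> A `<=` B -> closed A.
Proof.
move=> noB AB x; rewrite closure_isolated_limit_point => -[/isolatedS //|lx].
exfalso; apply: (noB x) => U nU; have [y [yx Ay Uy]] := lx U nU.
by exists y; split => //; exact: AB.
Qed.

Lemma CLP_compact_discrete_finite (C : set T) :
  accessible_space T -> CLP_compact T -> clopen C ->
  (forall c, C c -> open [set c]) -> finite_set C.
Proof.
move=> acc clp [oC cC] isoC.
pose F := [set A | A = ~` C \/ exists2 c, C c & A = [set c]].
have clopenF A : F A -> clopen A.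
  case=> [->|[c Cc ->]]; split.
  - exact: closed_openC.
  - exact: open_closedC.
  - exact: isoC.
  - exact: accessible_closed_set1.
have coverF : [set: T] `<=` \bigcup_(A in F) A.
  move=> s _; have [Cs|nCs] := pselect (C s).
    by exists [set s] => //; right; exists s.
  by exists (~` C) => //; left.
have [Fin [finFin FinF] coverFin] := clp F clopenF coverF.
apply: (@sub_finite_set _ _ (\bigcup_(A in Fin) (A `&` C))).
  by move=> c Cc; have [A FinA Ac] := coverFin c I; exists A.
apply: bigcup_finite => // A /FinF [->|[c _ ->]].
  by rewrite setICl; exact: finite_set0.
exact: finite_setIl (finite_set1 c).
Qed.

Lemma CLP_compact_limit_point (B E : set T) :
  accessible_space T -> CLP_compact T -> finite_set E ->
  (forall b, B b -> ~ E b -> open [set b]) -> infinite_set B ->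
  exists x, limit_point B x.
Proof.
move=> acc clp finE isoB infB; apply: contrapT => /forallNP noB.
have isoBE b : (B `\` E) b -> open [set b] by case=> Bb Eb; exact: isoB.
have clBE : closed (B `\` E) by exact: closed_of_sub_no_limit_point noB _.
have oBE : open (B `\` E).
  rewrite openE => b BEb; apply: filterS (open_nbhs_nbhs (conj (isoBE b BEb) erefl)).
  by move=> _ ->.
have finBE := CLP_compact_discrete_finite acc clp (conj oBE clBE) isoBE.
apply: infB; apply: (@sub_finite_set _ _ ((B `\` E) `|` E)).
  by move=> b Bb; have [Eb|nEb] := pselect (E b); [right|left].
by rewrite finite_setU.
Qed.

End Topology.

Section GraphInverseSemigroup.
Variables (V Ed : eqType) (gsrc grng : Ed -> V).
Local Notation G := (GIelem gsrc grng).

Lemma walk_cat (x : V) (p q : seq Ed) :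
  walk gsrc grng x (p ++ q) =
  walk gsrc grng x p && walk gsrc grng (last x (map grng p)) q.
Proof. by elim: p x => [|e p IH] x //=; rewrite IH andbA. Qed.

Lemma prng_cat (x : V) (p q : seq Ed) :
  prng grng (x, p ++ q) = prng grng (prng grng (x, p), q).
Proof. by rewrite /prng /= map_cat last_cat. Qed.

Lemma GImul_Some_cases (A B C D X Y : gpath V Ed) :
  GImul (Some (A, B)) (Some (C, D)) = Some (X, Y) ->
  (C.1 = B.1 /\ exists s, [/\ C.2 = B.2 ++ s, X = (A.1, A.2 ++ s) & Y = D]) \/
  (B.1 = C.1 /\ exists s, [/\ B.2 = C.2 ++ s, X = A & Y = (D.1, D.2 ++ s)]).
Proof.
rewrite /=; case: ifP => [/andP[/eqP E /prefixP[s Es]] [<- <-]|_].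
  by left; split => //; exists s; rewrite Es drop_size_cat.
case: ifP => [/andP[/eqP E /prefixP[s Es]] [<- <-]|//].
by right; split => //; exists s; rewrite Es drop_size_cat //; case: A.
Qed.

Lemma GIelem_mul x y : G x -> G y -> G (GImul x y).
Proof.
case: x => [[A B]|] //; case: y => [[C D]|] //.
case E: (GImul _ _) => [[X Y]|] //.
move/GImul_Some_cases: E => [[EC [s [Es -> ->]]]|[EB [s [Es -> ->]]]].
- case: A => a1 a2; case: B EC Es => b1 b2; case: C => c1 c2 /= -> -> {c1 c2}.
  move=> [pa pb eab] [pc pd ecd]; split => //.
  + move: pc; rewrite /is_path /= walk_cat => /andP[_ ps].
    rewrite /is_path /= walk_cat; move: pa; rewrite /is_path /= => -> /=.
    by move: eab; rewrite /prng /= => ->.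
  + by rewrite prng_cat -ecd prng_cat eab.
- case: C EB Es => c1 c2; case: B => b1 b2 /= -> -> {b1 b2}; case: D => d1 d2.
  move=> [pa pb eab] [pc pd ecd]; split => //.
  + move: pb; rewrite /is_path /= walk_cat => /andP[_ ps].
    rewrite /is_path /= walk_cat; move: pd; rewrite /is_path /= => -> /=.
    by move: ecd; rewrite /prng /= => <-.
  + by rewrite eab /= prng_cat ecd -prng_cat.
Qed.

Lemma GIvertex_mul_neq0 (w a1 : V) (a2 : seq Ed) (b : gpath V Ed) :
  GImul (GIvertex Ed w) (Some ((a1, a2), b)) != None -> a1 = w.
Proof.
by rewrite /=; case: (eqVneq a1 w) => // ne; rewrite [w == a1]eq_sym (negbTE ne).
Qed.

Lemma GImul_vertex_neq0 (w b1 : V) (b2 : seq Ed) (a : gpath V Ed) :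
  GImul (Some (a, (b1, b2))) (GIvertex Ed w) != None -> b1 = w.
Proof.
by rewrite /=; case: (eqVneq b1 w) => // ne; rewrite [w == b1]eq_sym (negbTE ne).
Qed.

Lemma GIvertex_sink_unique (w : V) (y : GIraw V Ed) :
  (forall e, gsrc e != w) -> G y ->
  GImul (GIvertex Ed w) y != None -> GImul y (GIvertex Ed w) != None ->
  y = GIvertex Ed w.
Proof.
move=> sink; case: y => [[[a1 a2] [b1 b2]]|] // [pa pb _].
move=> /GIvertex_mul_neq0 Ea /GImul_vertex_neq0 Eb; subst a1 b1.
move: pa pb; rewrite /is_path /=.
case: a2 => [|c a2] /=; last by rewrite (negbTE (sink c)).
by case: b2 => [|c b2] /=; [|rewrite (negbTE (sink c))].
Qed.

Lemma GIvertex_edge_cases (e : Ed) (y : GIraw V Ed) :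
  GImul (GIvertex Ed (gsrc e)) y != None -> GImul y (GIvertex Ed (gsrc e)) != None ->
  GImul (GIinvedge gsrc grng e) y != None -> GImul y (GIedge gsrc grng e) != None ->
  [\/ y = GIvertex Ed (gsrc e),
      GImul (GImul (GIedge gsrc grng e) (GIinvedge gsrc grng e)) y = y |
      GImul y (GImul (GIedge gsrc grng e) (GIinvedge gsrc grng e)) = y].
Proof.
case: y => [[[a1 a2] [b1 b2]]|] //.
move=> /GIvertex_mul_neq0 -> /GImul_vertex_neq0 ->.
case: a2 => [|c a2].
  case: b2 => [|d b2]; first by constructor 1.
  move=> _ H; constructor 3; move: H; rewrite /= !eqxx /=.
  by case: (eqVneq d e) => [->|//]; case: b2 => [|x b2] //=; rewrite ?eqxx ?drop0.
move=> H _; constructor 2; move: H; rewrite /= !eqxx /=.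
by case: (eqVneq c e) => [->|//]; rewrite !eqxx /= ?prefix0s /= drop0.
Qed.

Definition GIinvpath (u : gpath V Ed) : GIraw V Ed := Some ((prng grng u, [::]), u).
Definition GIpath (v : gpath V Ed) : GIraw V Ed := Some (v, (prng grng v, [::])).

(* The element u' v'^-1 where u = u' t, v = v' t and the common tail t has
   length |u| - j. *)
Definition GIcut (u v : gpath V Ed) (j : nat) : GIraw V Ed :=
  Some ((u.1, take j u.2), (v.1, take (size v.2 - (size u.2 - j)) v.2)).

Lemma GImul_invpath_path (u v : gpath V Ed) : prng grng u = prng grng v ->
  GImul (GImul (GIinvpath u) (Some (u, v))) (GIpath v) = GIvertex Ed (prng grng u).
Proof.
by move=> uv; rewrite /= eqxx prefix_refl /= drop_size eqxx prefix_refl /= drop_size uv.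
Qed.

Lemma GIcut_common_tail (u v a b : gpath V Ed) (t : seq Ed) :
  a.1 = u.1 -> b.1 = v.1 -> u.2 = a.2 ++ t -> v.2 = b.2 ++ t ->
  exists2 j, j < (size u.2).+1 & Some (a, b) = GIcut u v j.
Proof.
case: u v a b => [u1 u2] [v1 v2] [a1 a2] [b1 b2] /= -> -> -> ->.
exists (size a2); first by rewrite ltnS size_cat leq_addr.
by rewrite /GIcut /= take_size_cat // !size_cat addKn addnK take_size_cat.
Qed.

Lemma GImul_invpath_path_fibre (u v : gpath V Ed) (y : GIraw V Ed) :
  GImul (GImul (GIinvpath u) y) (GIpath v) = GIvertex Ed (prng grng u) ->
  exists2 j, j < (size u.2).+1 & y = GIcut u v j.
Proof.
case: y => [[a b]|] //.
case E: (GImul (GIinvpath u) (Some (a, b))) => [[X Y]|] //.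
rewrite /GIpath /GIvertex => /GImul_Some_cases.
have cut := @GIcut_common_tail u v a b.
move/GImul_Some_cases: E => [[ua [s [Es -> ->]]] | [ua [s [Es -> ->]]]] /=.
- move=> [[bv [t [Et [] ]]]|[bv [t [Et [] ]]]].
  + move=> /esym/eqP; rewrite -size_eq0 size_cat addn_eq0.
    move=> /andP[/nilP s0 /nilP t0] _; subst s t.
    by apply: (cut [::]); rewrite ?Es ?Et ?cats0 //; apply/esym.
  + move=> s0 [_ t0]; subst s t.
    by apply: (cut [::]); rewrite ?Es ?Et ?cats0 //; apply/esym.
- move=> [[bv [t [Et [t0] _]]]|[bv [t [Et _ [_ t0]]]]]; subst t.
  + by apply: (cut s); rewrite ?Es ?Et ?cats0 //; apply/esym.
  + by apply: (cut s); rewrite ?Es ?Et ?cats0 //; apply/esym.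
Qed.

End GraphInverseSemigroup.

Section EmbeddedGraphInverseSemigroup.
Variables (V Ed : eqType) (gsrc grng : Ed -> V).
Variables (S : topologicalType) (mul : S -> S -> S) (f : GIraw V Ed -> S).
Local Notation G := (GIelem gsrc grng).
Hypotheses (hS : hausdorff_space S)
  (mull_cont : forall a, continuous (mul a))
  (mulr_cont : forall a, continuous (fun x => mul x a))
  (f_inj : {in G &, injective f})
  (f_mul : forall x y, G x -> G y -> f (GImul x y) = mul (f x) (f y)).

Let accS : accessible_space S := hausdorff_accessible hS.

Lemma f_neq x y : G x -> G y -> x <> y -> f x <> f y.
Proof. by move=> Gx Gy xy fxy; apply: xy; apply: f_inj fxy; exact: mem_set. Qed.

Lemma GImul_neq0 x y :
  G x -> G y -> mul (f x) (f y) <> f None -> GImul x y != None.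
Proof. by move=> Gx Gy xy0; apply/eqP => xy; apply: xy0; rewrite -f_mul // xy. Qed.

Lemma nbhs_mull_neq a x c : G a -> G x -> G c -> GImul a x <> c ->
  nbhs (f x) [set s | mul (f a) s <> f c].
Proof.
move=> Ga Gx Gc axc; apply: nbhs_preimage_neq accS (@mull_cont _) _.
by rewrite -f_mul //; apply: f_neq (GIelem_mul Ga Gx) Gc axc.
Qed.

Lemma nbhs_mulr_neq a x c : G a -> G x -> G c -> GImul x a <> c ->
  nbhs (f x) [set s | mul s (f a) <> f c].
Proof.
move=> Ga Gx Gc xac; apply: nbhs_preimage_neq accS (@mulr_cont _) _.
by rewrite /= -f_mul //; apply: f_neq (GIelem_mul Gx Ga) Gc xac.
Qed.

Lemma nbhs_mull_moves a x : G a -> G x -> GImul a x <> x ->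
  nbhs (f x) [set s | mul (f a) s <> s].
Proof.
move=> Ga Gx axx; apply: nbhs_not_fixed hS (@mull_cont _) _.
by rewrite -f_mul //; apply: f_neq (GIelem_mul Ga Gx) Gx axx.
Qed.

Lemma nbhs_mulr_moves a x : G a -> G x -> GImul x a <> x ->
  nbhs (f x) [set s | mul s (f a) <> s].
Proof.
move=> Ga Gx xax; apply: nbhs_not_fixed hS (@mulr_cont _) _.
by rewrite /= -f_mul //; apply: f_neq (GIelem_mul Gx Ga) Gx xax.
Qed.

Lemma isolated_image x : G x ->
  (exists2 N, nbhs (f x) N & forall y, G y -> N (f y) -> y = x) ->
  isolated (f @` G) (f x).
Proof.
move=> Gx [N nN NG]; split; first by apply/mem_set; exists x.
exists N => //; apply/seteqP; split => [s [Ns [y Gy fys]]|s ->].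
  by rewrite -fys (NG y Gy) // fys.
by split; [exact: nbhs_singleton | exists x].
Qed.

Lemma isolated_GIvertex w : isolated (f @` G) (f (GIvertex Ed w)).
Proof.
set W := GIvertex Ed w.
have GW : G W by [].
have GN : G None by [].
have WW0 : GImul W W <> None by rewrite /= eqxx.
have nWl := nbhs_mull_neq GW GW GN WW0.
have nWr := nbhs_mulr_neq GW GW GN WW0.
apply: isolated_image => //.
have [[e ew]|sink] := pselect (exists e, gsrc e = w); last first.
  eexists; first exact: filterI nWl nWr.
  move=> y Gy [Wy yW].
  apply: GIvertex_sink_unique Gy (GImul_neq0 GW Gy Wy) (GImul_neq0 Gy GW yW).
  by move=> e; apply/eqP => ew; apply: sink; exists e.
subst w.
have Ge : G (GIedge gsrc grng e) by split => //; rewrite /is_path /= eqxx.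
have Gi : G (GIinvedge gsrc grng e) by split => //; rewrite /is_path /= eqxx.
set h := GImul (GIedge gsrc grng e) (GIinvedge gsrc grng e).
have Gh : G h := GIelem_mul Ge Gi.
have niW : nbhs (f W) [set s | mul (f (GIinvedge gsrc grng e)) s <> f None].
  by apply: nbhs_mull_neq => //; rewrite /= eqxx.
have nWe : nbhs (f W) [set s | mul s (f (GIedge gsrc grng e)) <> f None].
  by apply: nbhs_mulr_neq => //; rewrite /= eqxx.
have nhW : nbhs (f W) [set s | mul (f h) s <> s].
  by apply: nbhs_mull_moves => //; rewrite /h /W /= !eqxx /= ?eqxx.
have nWh : nbhs (f W) [set s | mul s (f h) <> s].
  by apply: nbhs_mulr_moves => //; rewrite /h /W /= !eqxx /= ?eqxx.
eexists; first exact: filterI (filterI (filterI nWl nWr) (filterI niW nWe))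
                              (filterI nhW nWh).
move=> y Gy [[[Wy yW] [iy ye]] [hy yh]].
have [//|hyy|yhy] := GIvertex_edge_cases (GImul_neq0 GW Gy Wy)
  (GImul_neq0 Gy GW yW) (GImul_neq0 Gi Gy iy) (GImul_neq0 Gy Ge ye).
- by exfalso; apply: hy; rewrite -f_mul // hyy.
- by exfalso; apply: yh; rewrite -f_mul // yhy.
Qed.

Lemma isolated_GI_nonzero z : G z -> z <> None -> isolated (f @` G) (f z).
Proof.
case: z => [[u v]|] // Gz _; have [pu pv uv] := Gz.
have Gu : G (GIinvpath grng u) by [].
have Gv : G (GIpath grng v) by [].
pose g s := mul (mul (f (GIinvpath grng u)) s) (f (GIpath grng v)).
have g_f y : G y -> g (f y) = f (GImul (GImul (GIinvpath grng u) y) (GIpath grng v)).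
  by move=> Gy; rewrite !f_mul //; exact: GIelem_mul.
apply: (@isolated_pullback S g (f @` G) (f @` G) _ accS).
- by move=> s; exact: (continuous_comp (@mull_cont _ s) (@mulr_cont _ _)).
- move=> _ [_ [y Gy <-] <-]; rewrite g_f //.
  by exists (GImul (GImul (GIinvpath grng u) y) (GIpath grng v));
    first exact: GIelem_mul (GIelem_mul Gu Gy) Gv.
- by rewrite g_f // GImul_invpath_path //; exact: isolated_GIvertex.
- by exists (Some (u, v)).
apply: (@sub_finite_set _ _ ((fun j => f (GIcut u v j)) @` `I_(size u.2).+1)).
  move=> _ [[y Gy <-]]; rewrite /= !g_f // GImul_invpath_path // => fy.
  have [j ju ->] : exists2 j, j < (size u.2).+1 & y = GIcut u v j.
    apply: GImul_invpath_path_fibre; apply: f_inj fy; apply: mem_set => //.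
    exact: GIelem_mul (GIelem_mul Gu Gy) Gv.
  by exists j.
exact/finite_image/finite_II.
Qed.

Lemma open_GI_nonzero z : closure (f @` G) = [set: S] -> G z -> z <> None ->
  open [set f z].
Proof.
move=> dense Gz z0.
exact: isolated_dense_open_set1 accS dense (isolated_GI_nonzero Gz z0).
Qed.
End EmbeddedGraphInverseSemigroup.

Theorem corollary2p3 (V Ed : eqType) (gsrc grng : Ed -> V)
  (S : topologicalType) (mul : S -> S -> S)
  (f : GIraw V Ed -> S) :
  hausdorff_space S ->
  semitopological_semigroup mul ->
  CLP_compact S ->
  (* f embeds G(E) into S as a subsemigroup ... *)
  {in GIelem gsrc grng &, injective f} ->
  (forall x y, GIelem gsrc grng x -> GIelem gsrc grng y ->
     f (GImul x y) = mul (f x) (f y)) ->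
  (* ... which is dense in S *)
  closure (f @` GIelem gsrc grng) = [set: S] ->
  forall X : set (GIraw V Ed), X `<=` GIelem gsrc grng ->
    countably_compact_at (closure (f @` X)) (f @` X).
Proof.
move=> hS [_ [mull_cont mulr_cont]] clp f_inj f_mul dense X XG B BX infB.
have isoB b : B b -> ~ [set f None] b -> open [set b].
  move=> Bb b0; have [y Xy yb] := BX b Bb; rewrite -yb.
  apply: (open_GI_nonzero hS mull_cont mulr_cont f_inj f_mul dense (XG _ Xy)).
  by move=> y0; apply: b0; rewrite -yb y0.
have [x Bx] := CLP_compact_limit_point (hausdorff_accessible hS) clp
  (finite_set1 (f None)) isoB infB.
by exists x => //; apply: closureS BX _ (subset_limit_point Bx).
Qed.
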